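(* Let $|\psi\rangle,|\phi\rangle,|e\rangle,|f\rangle$ be unit vectors in $\mathbb{C}^2$ and let $\mathcal{GE}$ be the set of entanglement breaking channels on $\mathcal{L}(\mathbb{C}^2)$. Then $$\max_{\Psi\in\mathcal{GE}}\left\{\frac12\langle e|\Psi(|\psi\rangle\langle\psi|)|e\rangle+\frac12\langle f|\Psi(|\phi\rangle\langle\phi|)|f\rangle\right\}\le\frac12\left(1+\sqrt{|\langle e|f\rangle|^2+\max\left\{|\langle\psi|\phi\rangle||\langle e|f\rangle|,\sqrt{(1-|\langle\psi|\phi\rangle|^2)(1-|\langle e|f\rangle|^2)}\right\}^2}\right).$$
   Context: A quantum channel (linear, completely positive, trace preserving map on $\mathcal{L}(\mathbb{C}^2)$) $\Psi$ is entanglement breaking if $(\mathrm{id}\otimes\Psi)(\rho)$ is separable for every density operator $\rho$ on $\mathbb{C}^2\otimes\mathbb{C}^2$. *)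

(* Complex numbers are modelled as R[i] (mathcomp-real-closed
   `complex`) over an arbitrary R : realType (complete archimedean ordered
   field, i.e. the reals), so R[i] is the field of complex numbers. *)
From HB Require Import structures.
From mathcomp Require Import all_boot all_order all_algebra.
From mathcomp Require Import reals.
From mathcomp Require Import complex mxtens.
Set Implicit Arguments. Unset Strict Implicit. Unset Printing Implicit Defensive.
Import Order.TTheory GRing.Theory Num.Theory.
Local Open Scope ring_scope.

Section QDefs.
Variable C : numClosedFieldType.

Definition adjmx m n (A : 'M[C]_(m, n)) : 'M[C]_(n, m) := (map_mx Num.conj A)^T.

Definition braket n (u v : 'cV[C]_n) : C := (adjmx u *m v) 0 0.

Definition expect n (u : 'cV[C]_n) (A : 'M[C]_n) : C := (adjmx u *m A *m u) 0 0.

Definition ketbra n (u : 'cV[C]_n) : 'M[C]_n := u *m adjmx u.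

Definition unit_vec n (u : 'cV[C]_n) : Prop := braket u u = 1.

Definition psd n (A : 'M[C]_n) : Prop := forall v : 'cV[C]_n, 0 <= expect v A.

Definition density n (A : 'M[C]_n) : Prop := psd A /\ \tr A = 1.

(* (id_n (x) Psi) applied to X : L(C^n (x) C^2), with the Kronecker ordering
   of mxtens (first factor = outer index). *)
Definition block n (X : 'M[C]_(n * 2)) (a a' : 'I_n) : 'M[C]_2 :=
  \matrix_(b, b') X (mxtens_index (a, b)) (mxtens_index (a', b')).

Definition id_tens n (Psi : 'M[C]_2 -> 'M[C]_2) (X : 'M[C]_(n * 2))
  : 'M[C]_(n * 2) :=
  \matrix_(i, j)
    Psi (block X (mxtens_unindex i).1 (mxtens_unindex j).1)
        (mxtens_unindex i).2 (mxtens_unindex j).2.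

Definition is_linear_map m (Psi : 'M[C]_m -> 'M[C]_m) : Prop :=
  forall (a : C) (A B : 'M[C]_m), Psi (a *: A + B) = a *: Psi A + Psi B.

Definition completely_positive (Psi : 'M[C]_2 -> 'M[C]_2) : Prop :=
  forall n (X : 'M[C]_(n * 2)), psd X -> psd (id_tens Psi X).

Definition trace_preserving (Psi : 'M[C]_2 -> 'M[C]_2) : Prop :=
  forall A : 'M[C]_2, \tr (Psi A) = \tr A.

Definition quantum_channel (Psi : 'M[C]_2 -> 'M[C]_2) : Prop :=
  [/\ is_linear_map Psi, completely_positive Psi & trace_preserving Psi].

(* separable states on C^2 (x) C^2: finite convex combinations of product
   states (finite suffices by Caratheodory in finite dimension) *)
Definition separable (rho : 'M[C]_(2 * 2)) : Prop :=
  exists N (p : 'I_N -> C) (A B : 'I_N -> 'M[C]_2),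
    [/\ forall k, 0 <= p k, \sum_k p k = 1,
        forall k, density (A k), forall k, density (B k)
      & rho = \sum_k p k *: (A k *t B k)].

Definition entanglement_breaking (Psi : 'M[C]_2 -> 'M[C]_2) : Prop :=
  quantum_channel Psi /\
  forall rho : 'M[C]_(2 * 2), density rho -> separable (id_tens Psi rho).

End QDefs.

From HB Require Import structures.
From mathcomp Require Import all_boot all_order all_algebra.
From mathcomp Require Import reals.
From mathcomp Require Import complex mxtens.
From mathcomp Require Import ring lra.
Import Order.TTheory GRing.Theory Num.Theory.
Local Open Scope ring_scope.
(* An entanglement breaking qubit channel maps the maximally entangled state to a
   separable state, so it has the measure-and-prepare form
   Psi(X) = sum_k 2 p_k tr(A_k^T X) B_k with states A_k, B_k.  The value to bound
   is then the average sum_k p_k (M_k b_k + N_k b'_k) of products of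
   probabilities, where M_k, N_k are the probabilities of conj psi, conj phi in
   A_k and b_k, b'_k those of e, f in B_k.  In Bloch coordinates the pair
   (M_k + N_k - 1, M_k - N_k) lies in the ellipse with semi-axes |<psi|phi>| and
   sqrt(1 - |<psi|phi>|^2), and (b_k + b'_k - 1, b_k - b'_k) in the one for e, f.
   Bounding each term linearly over the second ellipse and averaging, using
   sum_k p_k (M_k + N_k) = 1 (trace preservation), gives the bound. *)

Local Notation cRe := complex.Re.
Local Notation cIm := complex.Im.

Section Ellipse.
Context {R : rcfType}.
Implicit Types a b x y S : R.

Lemma ler_sqrtr_sqr x y : x ^+ 2 <= y -> x <= Num.sqrt y.
Proof.
move=> le_x2y; apply: le_trans (ler_norm x) _.
by rewrite -sqrtr_sqr ler_sqrt // (le_trans (sqr_ge0 x)).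
Qed.

(* The support-function form of x^2/S + y^2/(1-S) <= 1, which stays meaningful
   in the degenerate cases S = 0 and S = 1. *)
Definition in_ellipse S x y : Prop :=
  forall a b, a * x + b * y <= Num.sqrt (a ^+ 2 * S + b ^+ 2 * (1 - S)).

Lemma in_ellipse_sqr {S x y} a b : in_ellipse S x y -> 0 < a * x + b * y ->
  (a * x + b * y) ^+ 2 <= a ^+ 2 * S + b ^+ 2 * (1 - S).
Proof.
move=> /(_ a b) le_sqrt gt0; set t := _ + b ^+ 2 * _ in le_sqrt *.
have [t_ge0|t_lt0] := lerP 0 t; last by move: le_sqrt; rewrite ltr0_sqrtr //; lra.
by rewrite -(sqr_sqrtr t_ge0) ler_sqr ?nnegrE ?sqrtr_ge0 // ltW.
Qed.

Lemma in_ellipse_sqr_le {S x y} : 0 <= S -> in_ellipse S x y -> x ^+ 2 <= S.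
Proof.
move=> S_ge0 xy_in; have [x_gt0|x_lt0|<-] := ltrgtP 0 x; last by rewrite expr0n.
  have := in_ellipse_sqr 1 0 xy_in.
  by rewrite !(mul1r, mul0r, addr0, expr1n) expr0n /= mul0r addr0; apply.
have := in_ellipse_sqr (-1) 0 xy_in.
rewrite !(mulN1r, mul0r, addr0, sqrrN, expr1n) expr0n /= mul0r addr0 mul1r.
by rewrite oppr_gt0; apply.
Qed.

Lemma cauchy_schwarz3 a1 a2 a3 b1 b2 b3 :
  (a1 * b1 + a2 * b2 + a3 * b3) ^+ 2 <=
  (a1 ^+ 2 + a2 ^+ 2 + a3 ^+ 2) * (b1 ^+ 2 + b2 ^+ 2 + b3 ^+ 2).
Proof.
rewrite -subr_ge0.
have -> : (a1 ^+ 2 + a2 ^+ 2 + a3 ^+ 2) * (b1 ^+ 2 + b2 ^+ 2 + b3 ^+ 2) -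
   (a1 * b1 + a2 * b2 + a3 * b3) ^+ 2 =
   (a1 * b2 - a2 * b1) ^+ 2 + (a1 * b3 - a3 * b1) ^+ 2 + (a2 * b3 - a3 * b2) ^+ 2
  by ring.
by rewrite !addr_ge0 ?sqr_ge0.
Qed.

(* m and n are the probabilities of the pure states with Bloch vectors p and q
   in the state with Bloch vector r, and S is the fidelity of these pure states. *)
Lemma bloch_in_ellipse p1 p2 p3 q1 q2 q3 r1 r2 r3 m n S :
  p1 ^+ 2 + p2 ^+ 2 + p3 ^+ 2 = 1 -> q1 ^+ 2 + q2 ^+ 2 + q3 ^+ 2 = 1 ->
  r1 ^+ 2 + r2 ^+ 2 + r3 ^+ 2 <= 1 ->
  2 * m = 1 + (r1 * p1 + r2 * p2 + r3 * p3) ->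
  2 * n = 1 + (r1 * q1 + r2 * q2 + r3 * q3) ->
  2 * S = 1 + (p1 * q1 + p2 * q2 + p3 * q3) ->
  in_ellipse S (m + n - 1) (m - n).
Proof.
move=> p_unit q_unit r_le1 m_def n_def S_def a b.
pose w1 := a * (p1 + q1) + b * (p1 - q1).
pose w2 := a * (p2 + q2) + b * (p2 - q2).
pose w3 := a * (p3 + q3) + b * (p3 - q3).
have -> : a * (m + n - 1) + b * (m - n) = (r1 * w1 + r2 * w2 + r3 * w3) / 2.
  have two_neq0 : (2 : R) != 0 by rewrite pnatr_eq0.
  apply: (canRL (mulfK two_neq0)).
  have -> : (a * (m + n - 1) + b * (m - n)) * 2 =
            a * (2 * m + 2 * n - 2) + b * (2 * m - 2 * n) by ring.
  by rewrite m_def n_def /w1 /w2 /w3; ring.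
have w_norm : w1 ^+ 2 + w2 ^+ 2 + w3 ^+ 2 = 4 * (a ^+ 2 * S + b ^+ 2 * (1 - S)).
  have -> : w1 ^+ 2 + w2 ^+ 2 + w3 ^+ 2 =
     a ^+ 2 * ((p1 ^+ 2 + p2 ^+ 2 + p3 ^+ 2) + (q1 ^+ 2 + q2 ^+ 2 + q3 ^+ 2)
               + 2 * (p1 * q1 + p2 * q2 + p3 * q3))
   + b ^+ 2 * ((p1 ^+ 2 + p2 ^+ 2 + p3 ^+ 2) + (q1 ^+ 2 + q2 ^+ 2 + q3 ^+ 2)
               - 2 * (p1 * q1 + p2 * q2 + p3 * q3))
   + 2 * a * b * ((p1 ^+ 2 + p2 ^+ 2 + p3 ^+ 2) - (q1 ^+ 2 + q2 ^+ 2 + q3 ^+ 2))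
    by rewrite /w1 /w2 /w3; ring.
  have -> : p1 * q1 + p2 * q2 + p3 * q3 = 2 * S - 1 by rewrite S_def; ring.
  by rewrite p_unit q_unit; ring.
apply: ler_sqrtr_sqr; rewrite expr_div_n ler_pdivrMr ?exprn_gt0 ?ltr0n //.
have := cauchy_schwarz3 r1 r2 r3 w1 w2 w3.
have : 0 <= w1 ^+ 2 + w2 ^+ 2 + w3 ^+ 2 by rewrite !addr_ge0 ?sqr_ge0.
rewrite w_norm; nra.
Qed.

Lemma in_ellipse_mix_le {S t K x y} : 0 <= t <= 1 ->
  t * S <= K ^+ 2 -> (1 - t) * (1 - S) <= K ^+ 2 -> in_ellipse S x y ->
  t * x ^+ 2 + (1 - t) * y ^+ 2 <= K ^+ 2.
Proof.
move=> /andP[t_ge0 t_le1] tS_le oneS_le xy_in; set Y := _ + _.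
have [Y_gt0|] := ltrP 0 Y; last by move/le_trans; apply; rewrite sqr_ge0.
have : Y ^+ 2 <= K ^+ 2 * Y.
  have := in_ellipse_sqr (t * x) ((1 - t) * y) xy_in.
  have -> : t * x * x + (1 - t) * y * y = Y by rewrite /Y; ring.
  move/(_ Y_gt0)/le_trans; apply.
  have tx_le : t * S * (t * x ^+ 2) <= K ^+ 2 * (t * x ^+ 2).
    by apply: ler_wpM2r; rewrite // mulr_ge0 ?sqr_ge0.
  have ty_le : (1 - t) * (1 - S) * ((1 - t) * y ^+ 2) <=
              K ^+ 2 * ((1 - t) * y ^+ 2).
    by apply: ler_wpM2r; rewrite // mulr_ge0 ?sqr_ge0 ?subr_ge0.
  rewrite /Y [K ^+ 2 * _]mulrDr; set L := (X in X <= _).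
  have -> : L = t * S * (t * x ^+ 2) + (1 - t) * (1 - S) * ((1 - t) * y ^+ 2).
    by rewrite /L; ring.
  exact: lerD.
by rewrite expr2 ler_pM2r.
Qed.

(* (1 + z) x + d y is at most H = sqrt(C + 2 C z + Y), and
   (T^2 + C z)^2 - (T H)^2 = T^2 (T^2 - C - Y) + C^2 z^2 >= 0. *)
Lemma in_ellipse_term_le C T z d x y : 0 <= C <= 1 -> z ^+ 2 <= 1 -> 0 < T ->
  C + (C * z ^+ 2 + (1 - C) * d ^+ 2) <= T ^+ 2 -> in_ellipse C x y ->
  T * ((1 + z) * x + d * y) <= T ^+ 2 + C * z.
Proof.
move=> /andP[C_ge0 C_le1] z_le1 T_gt0 le_T2 /(_ (1 + z) d) le_H.
set H := Num.sqrt _ in le_H; set Y := C * z ^+ 2 + _ in le_T2.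
have Y_ge0 : 0 <= Y by rewrite /Y; nra.
have H2 : H ^+ 2 = C + 2 * C * z + Y.
  rewrite /H sqr_sqrtr; first by rewrite /Y; ring.
  by rewrite addr_ge0 // mulr_ge0 ?sqr_ge0 ?subr_ge0.
apply: le_trans (_ : T * H <= _); first by rewrite ler_pM2l.
have Cz_ge : - C <= C * z.
  have z_ge : -1 <= z by nra.
  have : 0 <= C * (z + 1) by rewrite mulr_ge0 // -lerBlDr sub0r.
  lra.
have T_ge0 := ltW T_gt0.
rewrite -ler_sqr ?nnegrE ?mulr_ge0 ?sqrtr_ge0 //; last by lra.
by rewrite exprMn H2; nra.
Qed.

(* Averaging in_ellipse_term_le gives T (2 L - 1) <= T^2 for every
   T > sqrt(C + K^2); the margin 2 e keeps T positive. *)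
Lemma mixture_in_ellipse_le n (P M N b b' : 'I_n -> R) S C K :
  (forall k, 0 <= P k) -> \sum_k P k = 1 -> \sum_k P k * (M k + N k) = 1 ->
  (forall k, in_ellipse S (M k + N k - 1) (M k - N k)) ->
  (forall k, in_ellipse C (b k + b' k - 1) (b k - b' k)) ->
  0 <= S <= 1 -> 0 <= C <= 1 -> C * S <= K ^+ 2 -> (1 - C) * (1 - S) <= K ^+ 2 ->
  \sum_k P k * (M k * b k + N k * b' k) <= 2^-1 * (1 + Num.sqrt (C + K ^+ 2)).
Proof.
move=> P_ge0 P_sum1 PMN_sum1 MN_in bb_in /andP[S_ge0 S_le1] C01 CS_le oneCS_le.
set L := \sum_k _; set T0 := Num.sqrt _.
have T0_ge0 : 0 <= T0 := sqrtr_ge0 _.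
have T02 : T0 ^+ 2 = C + K ^+ 2.
  by rewrite sqr_sqrtr // addr_ge0 ?sqr_ge0 //; case/andP: C01.
apply/ler_addgt0Pr => e e_gt0; set T := T0 + 2 * e.
have T_gt0 : 0 < T by rewrite /T; lra.
suff : T * (2 * L - 1) <= T ^+ 2 by rewrite expr2 ler_pM2l // /T; lra.
have : \sum_k P k * (T * (2 * (M k * b k + N k * b' k) - (M k + N k))) <=
       \sum_k P k * (T ^+ 2 + C * (M k + N k - 1)).
  apply: ler_sum => k _; apply: ler_wpM2l => //.
  have -> : 2 * (M k * b k + N k * b' k) - (M k + N k) =
    (1 + (M k + N k - 1)) * (b k + b' k - 1) + (M k - N k) * (b k - b' k) by ring.
  apply: in_ellipse_term_le => //.
    by apply: le_trans (in_ellipse_sqr_le S_ge0 (MN_in k)) S_le1.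
  have := in_ellipse_mix_le C01 CS_le oneCS_le (MN_in k); rewrite /T; nra.
have -> : \sum_k P k * (T * (2 * (M k * b k + N k * b' k) - (M k + N k))) =
          T * (2 * L - \sum_k P k * (M k + N k)).
  by rewrite /L mulrBr mulrA !mulr_sumr -sumrB; apply: eq_bigr => k _; ring.
have -> : \sum_k P k * (T ^+ 2 + C * (M k + N k - 1)) =
          T ^+ 2 * \sum_k P k + C * (\sum_k P k * (M k + N k) - \sum_k P k).
  rewrite mulrBr !mulr_sumr -sumrB -big_split /=.
  by apply: eq_bigr => k _; ring.
by rewrite PMN_sum1 P_sum1 subrr mulr0 addr0 mulr1.
Qed.

End Ellipse.

Section Channel.
Context {C : numClosedFieldType}.

Lemma expectZ n (u : 'cV[C]_n) a A : expect u (a *: A) = a * expect u A.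
Proof. by rewrite /expect -scalemxAr -scalemxAl mxE. Qed.

Lemma expect_sum n (u : 'cV[C]_n) (I : finType) (F : I -> 'M[C]_n) :
  expect u (\sum_i F i) = \sum_i expect u (F i).
Proof. by rewrite /expect mulmx_sumr mulmx_suml summxE. Qed.

Lemma braketC n (u v : 'cV[C]_n) : braket u v = Num.conj (braket v u).
Proof.
rewrite /braket /adjmx !mxE rmorph_sum; apply: eq_bigr => i _.
by rewrite !mxE rmorphM /= conjCK mulrC.
Qed.

Lemma braket_conj n (u v : 'cV[C]_n) :
  braket (map_mx Num.conj u) (map_mx Num.conj v) = Num.conj (braket u v).
Proof.
by rewrite /braket !mxE rmorph_sum; apply: eq_bigr => i _; rewrite !mxE rmorphM.
Qed.

Lemma unit_vec_conj {n} {u : 'cV[C]_n} :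
  unit_vec u -> unit_vec (map_mx Num.conj u).
Proof. by rewrite /unit_vec braket_conj => ->; rewrite rmorph1. Qed.

Lemma expect_ketbra n (u v : 'cV[C]_n) :
  expect u (ketbra v) = Num.conj (braket v u) * braket v u.
Proof.
by rewrite /expect /ketbra !mulmxA -(mulmxA (adjmx u *m v)) mxE big_ord1 -braketC.
Qed.

Lemma tr_ketbra n (u : 'cV[C]_n) : \tr (ketbra u) = braket u u.
Proof. by rewrite /ketbra mxtrace_mulC trace_mx11. Qed.

Lemma mxtrace_trmx_mul n (A X : 'M[C]_n) :
  \tr (A^T *m X) = \sum_i \sum_j A i j * X i j.
Proof.
rewrite /mxtrace exchange_big; apply: eq_bigr => j _.
by rewrite mxE; apply: eq_bigr => i _; rewrite mxE.
Qed.

Lemma mxtrace_trmx_ketbra n (A : 'M[C]_n) (u : 'cV[C]_n) :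
  \tr (A^T *m ketbra u) = expect (map_mx Num.conj u) A.
Proof.
rewrite mxtrace_trmx_mul /expect mxE.
under [RHS]eq_bigr do rewrite mxE mulr_suml.
rewrite [RHS]exchange_big; apply: eq_bigr => i _; apply: eq_bigr => j _.
by rewrite /ketbra /adjmx !mxE big_ord1 !mxE /= conjCK; ring.
Qed.

Lemma sum_ord2 (V : nmodType) (F : 'I_2 -> V) : \sum_i F i = F 0 + F 1.
Proof. by rewrite big_ord_recl big_ord1; congr (F _ + F _); apply: val_inj. Qed.

Lemma braket2 (u v : 'cV[C]_2) :
  braket u v = Num.conj (u 0 0) * v 0 0 + Num.conj (u 1 0) * v 1 0.
Proof. by rewrite /braket mxE sum_ord2 !mxE. Qed.

Lemma expect2 (u : 'cV[C]_2) (A : 'M[C]_2) : expect u A =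
  Num.conj (u 0 0) * (A 0 0 * u 0 0 + A 0 1 * u 1 0) +
  Num.conj (u 1 0) * (A 1 0 * u 0 0 + A 1 1 * u 1 0).
Proof.
by rewrite /expect mxE sum_ord2 !mxE !sum_ord2 !mxE; ring.
Qed.

Lemma psd2 (A : 'M[C]_2) : psd A -> forall x y,
  0 <= Num.conj x * (A 0 0 * x + A 0 1 * y) + Num.conj y * (A 1 0 * x + A 1 1 * y).
Proof.
move=> A_psd x y; have := A_psd (\col_i (if i == 0 then x else y)).
by rewrite expect2 !mxE.
Qed.

Definition bell_vec : 'cV[C]_(2 * 2) :=
  \col_i ((mxtens_unindex i).1 == (mxtens_unindex i).2)%:R.

Definition bell_state : 'M[C]_(2 * 2) := 2^-1 *: ketbra bell_vec.

Lemma bell_state_density : density bell_state.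
Proof.
have bell_norm : braket bell_vec bell_vec = 2.
  rewrite /braket mxE !big_ord_recr big_ord0 /= /adjmx !mxE /=.
  by rewrite !(rmorph0, rmorph1) !mul0r !mulr1 !addr0 add0r.
split.
  move=> v; rewrite /bell_state expectZ expect_ketbra.
  by rewrite mulr_ge0 ?invr_ge0 ?ler0n // mulrC mul_conjC_ge0.
by rewrite /bell_state mxtraceZ tr_ketbra bell_norm mulVf ?pnatr_eq0.
Qed.

Lemma block_bell_state (a a' : 'I_2) :
  block bell_state a a' = 2^-1 *: delta_mx a a'.
Proof.
apply/matrixP => b b'; rewrite !mxE big_ord1 /adjmx !mxE !mxtens_indexK /=.
rewrite (eq_sym b a) (eq_sym b' a').
by case: (a == b); case: (a' == b');
  rewrite /= ?(rmorph0, rmorph1, mulr0, mulr1, mul0r).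
Qed.

Section ChoiState.
Variable Psi : 'M[C]_2 -> 'M[C]_2.
Hypothesis Psi_lin : is_linear_map Psi.
HB.instance Definition _ := GRing.isLinear.Build C 'M[C]_2 'M[C]_2 *:%R Psi Psi_lin.

(* The (a, a') block of (id (x) Psi)(bell_state) is Psi(E_aa') / 2, so a
   separable decomposition of it expresses Psi in measure-and-prepare form. *)
Lemma choi_measure_prepare N (p : 'I_N -> C) (A B : 'I_N -> 'M[C]_2) :
  id_tens Psi bell_state = \sum_k p k *: (A k *t B k) ->
  forall X, Psi X = \sum_k (2 * p k * \tr ((A k)^T *m X)) *: B k.
Proof.
move=> choi X.
have Psi_delta a a' : Psi (delta_mx a a') = \sum_k (2 * p k * A k a a') *: B k.
  apply/matrixP => b b'; rewrite summxE.
  have := congr1 (fun Y : 'M[C]_(2 * 2) =>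
    Y (mxtens_index (a, b)) (mxtens_index (a', b'))) choi.
  rewrite /id_tens mxE !mxtens_indexK /= block_bell_state linearZ summxE mxE.
  move=> /(congr1 ( *%R 2)).
  rewrite mulrA divff ?pnatr_eq0 // mul1r => ->; rewrite mulr_sumr.
  by apply: eq_bigr => k _; rewrite !mxE !mxtens_indexK /= !mulrA.
rewrite {1}[X]matrix_sum_delta linear_sum.
under eq_bigr do rewrite linear_sum.
under eq_bigr do under eq_bigr do rewrite linearZ /= Psi_delta scaler_sumr.
under eq_bigr do rewrite exchange_big /=.
rewrite exchange_big /=; apply: eq_bigr => k _.
rewrite mxtrace_trmx_mul mulr_sumr scaler_suml; apply: eq_bigr => a _.
rewrite mulr_sumr scaler_suml; apply: eq_bigr => a' _.
by rewrite scalerA; congr (_ *: _); ring.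
Qed.

End ChoiState.

Lemma eb_measure_prepare {Psi : 'M[C]_2 -> 'M[C]_2} :
  entanglement_breaking Psi ->
  exists N (p : 'I_N -> C) (A B : 'I_N -> 'M[C]_2),
    [/\ forall k, 0 <= p k, \sum_k p k = 1, forall k, density (A k),
         forall k, density (B k)
       & forall X, Psi X = \sum_k (2 * p k * \tr ((A k)^T *m X)) *: B k].
Proof.
case=> -[Psi_lin _ _] /(_ _ bell_state_density).
case=> N [p [A [B [p_ge0 p_sum1 A_dens B_dens choi]]]].
by exists N, p, A, B; split=> //; apply: choi_measure_prepare choi.
Qed.

End Channel.

Section Qubit.
Context {R : rcfType}.
Local Notation C := R[i].
Implicit Types (x y : C) (u v : 'cV[C]_2) (A : 'M[C]_2).

Lemma cRe_cIm_ge0 {x} : 0 <= x -> cIm x = 0 /\ 0 <= cRe x.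
Proof. by rewrite lecE => /andP[/eqP]. Qed.

Lemma cRe_ge0K x : 0 <= x -> (cRe x)%:C%C = x.
Proof. by move/ger0_real/RRe_real. Qed.

Lemma sqrtcR (a : R) : 0 <= a -> sqrtC a%:C%C = (Num.sqrt a)%:C%C.
Proof.
by move=> a_ge0; rewrite -{1}(sqr_sqrtr a_ge0) rmorphXn sqrCK // ler0c sqrtr_ge0.
Qed.

Lemma maxcR (a b : R) : Num.max a%:C%C b%:C%C = (Num.max a b)%:C%C.
Proof. by rewrite /Num.max /Order.max ltcR; case: (a < b). Qed.

Lemma density2P A : density A ->
  exists x w z : R, [/\ A 0 0 = x%:C%C, A 1 1 = (1 - x)%:C%C, A 0 1 = (w +i* z)%C,
                        A 1 0 = (w -i* z)%C & w ^+ 2 + z ^+ 2 <= x * (1 - x)].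
Proof.
case=> /psd2 A_psd; rewrite /mxtrace sum_ord2 => /(congr1 (@complex.Re R)).
(* Positivity on e0, e1, e0 + e1, e0 + i e1 makes A hermitian, and on
   (-A01, A00), (A11, -A10) gives A00 det A >= 0 and A11 det A >= 0. *)
have := cRe_cIm_ge0 (A_psd 1 0); have := cRe_cIm_ge0 (A_psd 0 1).
have := cRe_cIm_ge0 (A_psd 1 1); have := cRe_cIm_ge0 (A_psd 1 'i%C).
have := cRe_cIm_ge0 (A_psd (- A 0 1) (A 0 0)).
have := cRe_cIm_ge0 (A_psd (A 1 1) (- A 1 0)).
clear A_psd; case: (A 0 0) => x00 y00; case: (A 0 1) => x01 y01.
case: (A 1 0) => x10 y10; case: (A 1 1) => x11 y11 /=.
move=> [i6 r6] [i5 r5] [i4 r4] [i3 r3] [i2 r2] [i1 r1] tr.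
have ey00 : y00 = 0 by lra.
have ey11 : y11 = 0 by lra.
have ex11 : x11 = 1 - x00 by lra.
subst y00 y11 x11.
have ey10 : y10 = - y01 by lra.
have ex10 : x10 = x01 by lra.
subst y10 x10.
by exists x00, x01, y01; split=> //; nra.
Qed.

Definition fidelity {n} (u v : 'cV[C]_n) : R :=
  cRe (braket u v) ^+ 2 + cIm (braket u v) ^+ 2.

Lemma fidelity_ge0 {n} (u v : 'cV[C]_n) : 0 <= fidelity u v.
Proof. by rewrite addr_ge0 ?sqr_ge0. Qed.

Lemma normc_braket n (u v : 'cV[C]_n) :
  `|braket u v| = (Num.sqrt (fidelity u v))%:C%C.
Proof. exact: normc_def. Qed.

Lemma fidelity_conj n (u v : 'cV[C]_n) :
  fidelity (map_mx Num.conj u) (map_mx Num.conj v) = fidelity u v.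
Proof.
by rewrite /fidelity braket_conj; case: (braket u v) => a b /=; rewrite sqrrN.
Qed.

(* Lagrange's identity: |u|^2 |v|^2 - |<u|v>|^2 = |u0 v1 - u1 v0|^2. *)
Lemma fidelity_le1 {u v} : unit_vec u -> unit_vec v -> fidelity u v <= 1.
Proof.
rewrite /unit_vec /fidelity !braket2.
move=> /(congr1 (@complex.Re R)) u1 /(congr1 (@complex.Re R)) v1; move: u1 v1.
case: (u 0 0) => ur0 ui0; case: (u 1 0) => ur1 ui1.
case: (v 0 0) => vr0 vi0; case: (v 1 0) => vr1 vi1 /= u1 v1.
rewrite -subr_ge0 -[1](mul1r 1) -{1}u1 -v1; set D := (X in 0 <= X).
have -> : D = (ur0 * vr1 - ui0 * vi1 - ur1 * vr0 + ui1 * vi0) ^+ 2 +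
              (ur0 * vi1 + ui0 * vr1 - ur1 * vi0 - ui1 * vr0) ^+ 2.
  by rewrite /D; ring.
by rewrite addr_ge0 ?sqr_ge0.
Qed.

Lemma density_in_ellipse {A u v} : density A -> unit_vec u -> unit_vec v ->
  in_ellipse (fidelity u v) (cRe (expect u A) + cRe (expect v A) - 1)
                            (cRe (expect u A) - cRe (expect v A)).
Proof.
case/density2P=> x [w [z [A00 A11 A01 A10 det]]].
rewrite /unit_vec /fidelity !braket2 !expect2 A00 A11 A01 A10.
move=> /(congr1 (@complex.Re R)) u1 /(congr1 (@complex.Re R)) v1; move: u1 v1.
case: (u 0 0) => ur0 ui0; case: (u 1 0) => ur1 ui1.
case: (v 0 0) => vr0 vi0; case: (v 1 0) => vr1 vi1 /= u1 v1.
have {}u1 : ur0 ^+ 2 + ui0 ^+ 2 + ur1 ^+ 2 + ui1 ^+ 2 = 1 by rewrite -u1; ring.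
have {}v1 : vr0 ^+ 2 + vi0 ^+ 2 + vr1 ^+ 2 + vi1 ^+ 2 = 1 by rewrite -v1; ring.
pose p1 := 2 * (ur0 * ur1 + ui0 * ui1); pose p2 := 2 * (ur0 * ui1 - ui0 * ur1).
pose p3 := ur0 ^+ 2 + ui0 ^+ 2 - ur1 ^+ 2 - ui1 ^+ 2.
pose q1 := 2 * (vr0 * vr1 + vi0 * vi1); pose q2 := 2 * (vr0 * vi1 - vi0 * vr1).
pose q3 := vr0 ^+ 2 + vi0 ^+ 2 - vr1 ^+ 2 - vi1 ^+ 2.
(* p, q are the Bloch vectors of u, v and (2 w, - 2 z, 2 x - 1) that of A. *)
apply: (bloch_in_ellipse p1 p2 p3 q1 q2 q3 (2 * w) (- 2 * z) (2 * x - 1)).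
- transitivity ((ur0 ^+ 2 + ui0 ^+ 2 + ur1 ^+ 2 + ui1 ^+ 2) ^+ 2).
    by rewrite /p1 /p2 /p3; ring.
  by rewrite u1 expr1n.
- transitivity ((vr0 ^+ 2 + vi0 ^+ 2 + vr1 ^+ 2 + vi1 ^+ 2) ^+ 2).
    by rewrite /q1 /q2 /q3; ring.
  by rewrite v1 expr1n.
- have -> : (2 * w) ^+ 2 + (- 2 * z) ^+ 2 + (2 * x - 1) ^+ 2 =
            1 - 4 * (x * (1 - x) - (w ^+ 2 + z ^+ 2)) by ring.
  lra.
- transitivity ((ur0 ^+ 2 + ui0 ^+ 2 + ur1 ^+ 2 + ui1 ^+ 2) +
                (2 * w * p1 + - 2 * z * p2 + (2 * x - 1) * p3)).
    by rewrite /p1 /p2 /p3; ring.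
  by rewrite u1.
- transitivity ((vr0 ^+ 2 + vi0 ^+ 2 + vr1 ^+ 2 + vi1 ^+ 2) +
                (2 * w * q1 + - 2 * z * q2 + (2 * x - 1) * q3)).
    by rewrite /q1 /q2 /q3; ring.
  by rewrite v1.
- transitivity ((ur0 ^+ 2 + ui0 ^+ 2 + ur1 ^+ 2 + ui1 ^+ 2) *
                (vr0 ^+ 2 + vi0 ^+ 2 + vr1 ^+ 2 + vi1 ^+ 2) +
                (p1 * q1 + p2 * q2 + p3 * q3)).
    by rewrite /p1 /p2 /p3 /q1 /q2 /q3; ring.
  by rewrite u1 v1 mul1r.
Qed.

Lemma eb_value_le (Psi : 'M[C]_2 -> 'M[C]_2) psi phi e f (K : R) :
  entanglement_breaking Psi ->
  unit_vec psi -> unit_vec phi -> unit_vec e -> unit_vec f ->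
  fidelity e f * fidelity psi phi <= K ^+ 2 ->
  (1 - fidelity e f) * (1 - fidelity psi phi) <= K ^+ 2 ->
  2^-1 * expect e (Psi (ketbra psi)) + 2^-1 * expect f (Psi (ketbra phi))
    <= (2^-1 * (1 + Num.sqrt (fidelity e f + K ^+ 2)))%:C%C.
Proof.
move=> EB psi1 phi1 e1 f1 K_ge1 K_ge2.
have [N [p [A [B [p_ge0 p_sum1 A_dens B_dens Psi_mp]]]]] := eb_measure_prepare EB.
have [[_ _ Psi_tp] _] := EB.
pose mu u k := expect (map_mx Num.conj u) (A k).
have mu_ge0 u k : 0 <= mu u k := (A_dens k).1 _.
have B_ge0 g k : 0 <= expect g (B k) := (B_dens k).1 g.
have value u g :
    expect g (Psi (ketbra u)) = \sum_k 2 * p k * mu u k * expect g (B k).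
  rewrite Psi_mp expect_sum; apply: eq_bigr => k _.
  by rewrite expectZ mxtrace_trmx_ketbra.
have mu_sum u : unit_vec u -> \sum_k 2 * p k * mu u k = 1.
  move=> u1; rewrite -[RHS]u1 -tr_ketbra -Psi_tp Psi_mp raddf_sum.
  apply: eq_bigr => k _.
  by rewrite /= mxtraceZ (B_dens k).2 mulr1 mxtrace_trmx_ketbra.
pose P k := cRe (p k); pose M k := cRe (mu psi k); pose M' k := cRe (mu phi k).
pose b k := cRe (expect e (B k)); pose b' k := cRe (expect f (B k)).
have -> : 2^-1 * expect e (Psi (ketbra psi)) + 2^-1 * expect f (Psi (ketbra phi)) =
          (\sum_k P k * (M k * b k + M' k * b' k))%:C%C.
  rewrite !value rmorph_sum !mulr_sumr -big_split; apply: eq_bigr => k _ /=.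
  by rewrite rmorphM rmorphD !rmorphM /= !cRe_ge0K //; field.
rewrite lecR; apply: mixture_in_ellipse_le K_ge1 K_ge2.
- by move=> k; rewrite -ler0c /P cRe_ge0K.
- apply: complexI; rewrite rmorph_sum rmorph1 -p_sum1; apply: eq_bigr => k _.
  by rewrite /P /= cRe_ge0K.
- apply: complexI; rewrite rmorph_sum rmorph1 /=.
  transitivity (2^-1 * (\sum_k 2 * p k * mu psi k + \sum_k 2 * p k * mu phi k)).
    rewrite -big_split mulr_sumr; apply: eq_bigr => k _ /=.
    by rewrite rmorphM rmorphD /= !cRe_ge0K //; field.
  by rewrite !mu_sum // mulVf ?pnatr_eq0.
- move=> k; rewrite -fidelity_conj.
  exact: density_in_ellipse (A_dens k) (unit_vec_conj psi1) (unit_vec_conj phi1).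
- by move=> k; apply: density_in_ellipse.
- by rewrite fidelity_ge0 fidelity_le1.
- by rewrite fidelity_ge0 fidelity_le1.
Qed.

Lemma bound_realE {S F : R} : 0 <= S <= 1 -> 0 <= F <= 1 ->
  2^-1 * (1 + sqrtC ((Num.sqrt F)%:C%C ^+ 2 +
     Num.max ((Num.sqrt S)%:C%C * (Num.sqrt F)%:C%C)
             (sqrtC ((1 - (Num.sqrt S)%:C%C ^+ 2) *
                    (1 - (Num.sqrt F)%:C%C ^+ 2))) ^+ 2))
  = (2^-1 * (1 + Num.sqrt (F + Num.max (Num.sqrt S * Num.sqrt F)
                                   (Num.sqrt ((1 - S) * (1 - F))) ^+ 2)))%:C%C.
Proof.
move=> /andP[S_ge0 S_le1] /andP[F_ge0 F_le1].
rewrite -!rmorphXn !sqr_sqrtr // -rmorphM -(rmorph1 (@real_complex R)).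
rewrite -!rmorphB -rmorphM sqrtcR ?mulr_ge0 ?subr_ge0 // maxcR.
rewrite -rmorphXn -rmorphD sqrtcR ?addr_ge0 ?sqr_ge0 //.
by rewrite -rmorphD rmorphM /= fmorphV rmorphMn rmorph1.
Qed.

End Qubit.

Theorem corollary4 (R : realType) (psi phi e f : 'cV[R[i]]_2) :
  unit_vec psi -> unit_vec phi -> unit_vec e -> unit_vec f ->
  forall Psi : 'M[R[i]]_2 -> 'M[R[i]]_2, entanglement_breaking Psi ->
  2^-1 * expect e (Psi (ketbra psi)) + 2^-1 * expect f (Psi (ketbra phi))
  <= 2^-1 * (1 + sqrtC (`|braket e f| ^+ 2 +
        Num.max (`|braket psi phi| * `|braket e f|)
                (sqrtC ((1 - `|braket psi phi| ^+ 2) * (1 - `|braket e f| ^+ 2)))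
          ^+ 2)).
Proof.
move=> psi1 phi1 e1 f1 Psi EB.
have S01 : 0 <= fidelity psi phi <= 1 by rewrite fidelity_ge0 fidelity_le1.
have F01 : 0 <= fidelity e f <= 1 by rewrite fidelity_ge0 fidelity_le1.
rewrite !normc_braket (bound_realE S01 F01); set K := Num.max _ _.
have le_K a : 0 <= a -> Num.sqrt a <= K -> a <= K ^+ 2.
  move=> a_ge0 le_aK; rewrite -(sqr_sqrtr a_ge0) ler_sqr ?nnegrE ?sqrtr_ge0 //.
  exact: le_trans (sqrtr_ge0 a) le_aK.
case/andP: S01 => S_ge0 S_le1; case/andP: F01 => F_ge0 F_le1.
apply: eb_value_le => //.
- apply: le_K; first exact: mulr_ge0.
  by rewrite sqrtrM // mulrC le_max lexx.
- apply: le_K; first by rewrite mulr_ge0 ?subr_ge0.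
  by rewrite mulrC le_max lexx orbT.
Qed.
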